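(* Let $\Bbbk$ be a field, $S=\Bbbk[x_1,\ldots,x_n]$, $\prec$ a monomial order on $S$, $P=\{p_1,\ldots,p_m\}\subset\Bbbk^n$ distinct points, and $B$ the set of monomials outside $\mathrm{in}_\prec(I(P))$. Let $E=\{x_{i_1},\ldots,x_{i_{\bar n}}\}$ be a subset of the variables with $\mathrm{supp}(B)\subseteq E$, $|E|\le\min(m-1,n)$ and $E(P)$ of rank $|E|$. Let $\pi:\Bbbk^n\to\Bbbk^{\bar n}$, $\pi(a_1,\ldots,a_n)=(a_{i_1},\ldots,a_{i_{\bar n}})$, let $T=\Bbbk[y_{i_1},\ldots,y_{i_{\bar n}}]$ and $\pi^*:T\to S$ the monomorphism $y_{i_j}\mapsto x_{i_j}$. Let $\prec'$ be the monomial order on $T$ with $y^\alpha\prec'y^\beta$ iff $\pi^*(y^\alpha)\prec\pi^*(y^\beta)$, and let $B'$ be the set of monomials outside $\mathrm{in}_{\prec'}(I(\pi(P)))$. Then $\pi^*(B')=B$.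
   Context: $I(Q)$ denotes the vanishing ideal of a finite point set $Q$; $\mathrm{in}_\prec(I)$ is the ideal generated by leading monomials. The support of a set of monomials is the set of variables occurring with positive exponent in some of them. $E(P)$ is the $|E|\times m$ matrix whose rows are the evaluation vectors $(x(p_1),\ldots,x(p_m))$, $x\in E$. *)

From HB Require Import structures.
From mathcomp Require Import all_boot all_order all_algebra.
From mathcomp Require Export mpoly.
Set Implicit Arguments. Unset Strict Implicit. Unset Printing Implicit Defensive.
Import GRing.Theory.
Local Open Scope ring_scope.

(* A monomial order on exponent vectors 'X_{1..n}: a total order, compatible
   with multiplication of monomials (addition of exponents), with 1 = x^0
   below every monomial (equivalent, by Dickson, to being a well-order). *)
Definition monomial_order n (le : rel 'X_{1..n}) : Prop :=
  [/\ reflexive le, antisymmetric le, transitive le & total le] /\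
  (forall a b c : 'X_{1..n}, le a b -> le (a + c)%MM (b + c)%MM) /\
  (forall a : 'X_{1..n}, le 0%MM a).

Definition is_lead n (K : fieldType) (le : rel 'X_{1..n}) (f : {mpoly K[n]})
    (m : 'X_{1..n}) : bool :=
  (m \in msupp f) && all (fun m' => le m' m) (msupp f).

Definition vanishing_ideal n (K : fieldType) (Q : ('I_n -> K) -> Prop)
    (f : {mpoly K[n]}) : Prop :=
  forall x, Q x -> f.@[x] = 0.

Definition in_initial_ideal n (K : fieldType) (le : rel 'X_{1..n})
    (I : {mpoly K[n]} -> Prop) (q : {mpoly K[n]}) : Prop :=
  exists s : seq ({mpoly K[n]} * 'X_{1..n}),
    (forall gm, gm \in s -> exists f, [/\ I f, f != 0 & is_lead le f gm.2]) /\
    q = \sum_(gm <- s) gm.1 * 'X_[gm.2].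

Definition standard_monomial n (K : fieldType) (le : rel 'X_{1..n})
    (I : {mpoly K[n]} -> Prop) (b : 'X_{1..n}) : Prop :=
  ~ in_initial_ideal le I 'X_[b].

(* E = {x_{i_1},...,x_{i_nbar}} with i_1 < ... < i_nbar; the j-th variable
   y_{i_j} of T corresponds to the ordinal enum_val j of E. *)
Definition sel n (E : {set 'I_n}) (j : 'I_#|E|) : 'I_n := @enum_val _ (mem E) j.

Definition proj_pt n (K : fieldType) (E : {set 'I_n}) (a : 'I_n -> K)
    : 'I_#|E| -> K := fun j => a (sel j).

Definition emb_mon n (E : {set 'I_n}) (b : 'X_{1..#|E|}) : 'X_{1..n} :=
  [multinom (\sum_(j < #|E| | sel j == i) b j)%N | i < n].

Definition induced_order n (E : {set 'I_n}) (le : rel 'X_{1..n})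
    : rel 'X_{1..#|E|} := fun a b => le (emb_mon a) (emb_mon b).

Definition eval_matrix n m (K : fieldType) (E : {set 'I_n})
    (P : 'I_m -> 'I_n -> K) : 'M[K]_(#|E|, m) :=
  \matrix_(i < #|E|, j < m) P j (sel i).

From mathcomp Require Import all_boot all_order all_algebra.
From mathcomp Require Import mpoly.
From mathcomp Require Import ring zify.
From Stdlib Require Import Classical ClassicalEpsilon.
Set Implicit Arguments. Unset Strict Implicit. Unset Printing Implicit Defensive.
Import GRing.Theory.
Local Open Scope ring_scope.

(* A monomial x^b is standard for I(Q) exactly when the evaluation vector of x^b on Q
   is not a linear combination of the evaluation vectors of strictly smaller monomials:
   such a relation is a polynomial of I(Q) with leading monomial x^b, and conversely the
   leading monomial of an element of I(Q), times any monomial, satisfies such a relation.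
   Since monomial orders are well founded (Dickson's lemma), every evaluation vector is
   then a combination of those of standard monomials below it.  The standard monomials
   for P only involve variables of E, and x^(pi^* b') evaluated at P is y^b' evaluated
   at pi(P); hence the criterion for b' with respect to prec' and pi(P) is the criterion
   for pi^* b' with respect to prec and P. *)

Lemma exists_tail_minimizer (u : nat -> nat) p :
  exists q, (p < q)%N /\ forall r, (p < r)%N -> (u q <= u r)%N.
Proof.
suff tail_min v : (exists2 k, (p < k)%N & (u k <= v)%N) ->
    exists q, (p < q)%N /\ forall r, (p < r)%N -> (u q <= u r)%N.
  by apply: (tail_min (u p.+1)); exists p.+1.
elim: v => [|v IHv] [k pk ukv].
  by exists k; split=> // r _; move: ukv; rewrite leqn0 => /eqP ->.
have [/IHv //|no_lower] := classic (exists2 k, (p < k)%N & (u k <= v)%N).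
exists k; split=> // r pr; rewrite leqNgt; apply/negP => ltr; apply: no_lower.
by exists r => //; lia.
Qed.

Lemma exists_nondecreasing_subseq (u : nat -> nat) : exists phi : nat -> nat,
  (forall i, (phi i < phi i.+1)%N) /\ (forall i, (u (phi i) <= u (phi i.+1))%N).
Proof.
have [next nextP] := choice _ (exists_tail_minimizer u).
exists (fun i => iter i.+1 next 0%N); split=> i; rewrite [iter i.+2 _ _]iterS.
  by case: (nextP (iter i.+1 next 0%N)).
have [lt_next _] := nextP (iter i.+1 next 0%N).
have [lt_prev min_prev] := nextP (iter i next 0%N).
exact/min_prev/(ltn_trans lt_prev lt_next).
Qed.

Lemma dickson_seq n (f : nat -> 'X_{1..n}) : exists i j, (i < j)%N /\ (f i <= f j)%MM.
Proof.
suff coords k : exists phi : nat -> nat, (forall i, (phi i < phi i.+1)%N) /\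
    forall i (t : 'I_n), (t < k)%N -> (f (phi i) t <= f (phi i.+1) t)%N.
  have [phi [phi_incr f_incr]] := coords n.
  by exists (phi 0%N), (phi 1%N); split=> //; apply/mnm_lepP => t; apply: f_incr.
elim: k => [|k [phi [phi_incr f_incr]]]; first by exists id.
have [kn|nk] := ltnP k n; last first.
  by exists phi; split=> // i t tk; apply: f_incr; apply: leq_trans (ltn_ord t) nk.
have [psi [psi_incr fk_incr]] :=
  exists_nondecreasing_subseq (fun i => f (phi i) (Ordinal kn)).
exists (phi \o psi); split=> [i|i t].
  exact: (homo_ltn (r := fun a b => (a < b)%N) ltn_trans phi_incr).
rewrite ltnS leq_eqVlt => /orP [/eqP tk|tk].
  have -> : t = Ordinal kn by apply: val_inj.
  exact: fk_incr.
apply: (homo_leq (f := fun a => f (phi a) t) (r := fun a b => (a <= b)%N) leqnn leq_trans).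
  by move=> a; apply: f_incr.
exact: ltnW.
Qed.

Lemma wf_no_descending_chain (T : Type) (R : T -> T -> Prop) :
  (forall f : nat -> T, ~ forall i, R (f i.+1) (f i)) -> well_founded R.
Proof.
move=> no_chain c; apply: NNPP => not_acc.
have step (x : {x | ~ Acc R x}) : exists y : {x | ~ Acc R x}, R (sval y) (sval x).
  apply: NNPP => no_step; apply: (svalP x).
  constructor => y Ryx; apply: NNPP => y_not_acc; apply: no_step.
  by exists (exist _ y y_not_acc).
have [next nextP] := choice _ step.
by apply: (no_chain (fun i => sval (iter i next (exist _ c not_acc)))) => i; rewrite iterS.
Qed.

Section MonomialOrder.
Variables (n : nat) (le : rel 'X_{1..n}).
Hypothesis le_mo : monomial_order le.

Lemma mo_refl : reflexive le. Proof. by case: le_mo => -[]. Qed.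
Lemma mo_anti : antisymmetric le. Proof. by case: le_mo => -[]. Qed.
Lemma mo_trans : transitive le. Proof. by case: le_mo => -[]. Qed.

Lemma mo_addr a b c : le a b -> le (a + c)%MM (b + c)%MM.
Proof. by have [_ [addr _]] := le_mo; apply: addr. Qed.

Lemma mo_divides a b : (a <= b)%MM -> le a b.
Proof.
move=> ab; have [_ [_ le0]] := le_mo.
by have := @mo_addr 0%MM (b - a)%MM a (le0 _); rewrite add0m submK.
Qed.

Lemma monomial_order_wf : well_founded (fun a b => le a b && (a != b)).
Proof.
apply: wf_no_descending_chain => f f_desc.
have f_le i d : le (f (i + d)%N) (f i).
  elim: d => [|d IHd]; first by rewrite addn0 mo_refl.
  by rewrite addnS; apply: mo_trans IHd; case/andP: (f_desc (i + d)%N).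
(* Some f i divides a later f j, so f i <= f j <= f i.+1 < f i. *)
have [i [j [ij fij]]] := dickson_seq f.
have [fi1_le fi1_neq] := andP (f_desc i).
have fi_le : le (f i) (f i.+1).
  by apply: mo_trans (mo_divides fij) _; have := f_le i.+1 (j - i.+1)%N; rewrite subnKC.
have : f i.+1 = f i by apply: mo_anti; rewrite fi1_le fi_le.
by move/eqP; rewrite (negbTE fi1_neq).
Qed.

End MonomialOrder.

Section Embedding.
Variables (n : nat) (E : {set 'I_n}).

Lemma emb_mon_sel (b : 'X_{1..#|E|}) j : emb_mon b (sel j) = b j.
Proof.
rewrite mnmE (bigD1 j) ?eqxx //= big1 ?addn0 // => k /andP [/eqP sel_kj neq_kj].
by rewrite (enum_val_inj sel_kj) eqxx in neq_kj.
Qed.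

Lemma emb_mon_notin (b : 'X_{1..#|E|}) i : i \notin E -> emb_mon b i = 0%N.
Proof.
move=> iNE; rewrite mnmE big1 // => k /eqP sel_k.
by rewrite -sel_k /sel enum_valP in iNE.
Qed.

Lemma emb_mon_inj : injective (@emb_mon n E).
Proof. by move=> a b eq_ab; apply/mnmP => j; rewrite -!(emb_mon_sel _ j) eq_ab. Qed.

Lemma emb_monD (a b : 'X_{1..#|E|}) : emb_mon (a + b)%MM = (emb_mon a + emb_mon b)%MM.
Proof.
apply/mnmP => i; rewrite mnmDE !mnmE -big_split /=.
by apply: eq_bigr => j _; rewrite mnmDE.
Qed.

Lemma emb_mon0 : emb_mon (0%MM : 'X_{1..#|E|}) = 0%MM.
Proof. by apply/mnmP => i; rewrite mnmE mnm0E big1 // => j _; rewrite mnm0E. Qed.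

Definition restr_mon (d : 'X_{1..n}) : 'X_{1..#|E|} := [multinom d (sel j) | j < #|E|].

Definition supported_in (d : 'X_{1..n}) : Prop := forall i, (0 < d i)%N -> i \in E.

Lemma restr_monK d : supported_in d -> emb_mon (restr_mon d) = d.
Proof.
move=> d_supp; apply/mnmP => i; have [iE|iNE] := boolP (i \in E).
  by rewrite -(enum_rankK_in iE iE) -/(sel _) emb_mon_sel mnmE.
rewrite emb_mon_notin //; case: (posnP (d i)) => // /d_supp.
by rewrite (negbTE iNE).
Qed.

Lemma induced_order_mo le : monomial_order le -> monomial_order (@induced_order n E le).
Proof.
move=> le_mo; split; last split.
- split=> [a|a b|a b c|a b]; rewrite /induced_order.
  + exact: mo_refl.
  + by move/(mo_anti le_mo)/emb_mon_inj.
  + exact: mo_trans.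
  + by have [[_ _ _ ->]] := le_mo.
- by move=> a b c; rewrite /induced_order !emb_monD; apply: mo_addr.
- by move=> a; rewrite /induced_order emb_mon0; have [_ [_ ->]] := le_mo.
Qed.

Lemma mevalX_emb_mon (K : fieldType) (b : 'X_{1..#|E|}) (x : 'I_n -> K) :
  ('X_[emb_mon b] : {mpoly K[n]}).@[x] = ('X_[b] : {mpoly K[#|E|]}).@[proj_pt x].
Proof.
rewrite !mevalX (bigID (mem E)) /= [X in _ * X]big1 ?mulr1; last first.
  by move=> i iNE; rewrite emb_mon_notin // expr0.
rewrite (big_enum_val (A := mem E)) /=; apply: eq_bigr => j _.
by rewrite -/(sel j) emb_mon_sel.
Qed.

End Embedding.

Section LinearCombination.
Variables (K : fieldType) (m : nat).

Definition is_lincomb (T : eqType) (w : T -> 'I_m -> K) (G : T -> Prop) (v : 'I_m -> K)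
    : Prop :=
  exists s : seq (K * T),
    (forall y, y \in s -> G y.2) /\ forall j, v j = \sum_(y <- s) y.1 * w y.2 j.

Lemma lincomb_self (T : eqType) (w : T -> 'I_m -> K) (G : T -> Prop) x :
  G x -> is_lincomb w G (w x).
Proof.
move=> Gx; exists [:: (1, x)].
by split=> [y /[1!inE]/eqP ->|j]; rewrite ?big_seq1 ?mul1r.
Qed.

Lemma lincomb_trans (T : eqType) (w : T -> 'I_m -> K) (G G' : T -> Prop) v :
  (forall x, G' x -> is_lincomb w G (w x)) -> is_lincomb w G' v -> is_lincomb w G v.
Proof.
move=> G'_comb [s [sG' vE]]; elim: s v sG' vE => [|x s IHs] v sG' vE.
  by exists [::]; split=> // j; rewrite vE !big_nil.
have [sx [sxG wx]] := G'_comb _ (sG' x (mem_head _ _)).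
have [t [tG tE]] :=
  IHs _ (fun y ys => sG' y (mem_behead (s := x :: s) ys)) (fun j => erefl).
exists ([seq (x.1 * y.1, y.2) | y <- sx] ++ t); split.
  move=> y; rewrite mem_cat => /orP [/mapP [z zsx ->]|yt]; [exact: sxG zsx | exact: tG].
move=> j; rewrite vE big_cons big_cat big_map wx tE mulr_sumr; congr (_ + _).
by apply: eq_bigr => y _; rewrite mulrA.
Qed.

Lemma lincomb_map (T T' : eqType) (f : T -> T')
    (w : T -> 'I_m -> K) (w' : T' -> 'I_m -> K) (G : T -> Prop) (G' : T' -> Prop) v v' :
  (forall x, G x -> G' (f x) /\ w' (f x) =1 w x) -> v' =1 v ->
  is_lincomb w G v -> is_lincomb w' G' v'.
Proof.
move=> Gf vv' [s [sG vE]]; exists [seq (y.1, f y.2) | y <- s]; split.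
  by move=> _ /mapP [y ys ->]; case: (Gf _ (sG y ys)).
move=> j; rewrite vv' vE big_map; apply: eq_big_seq => y ys.
by case: (Gf _ (sG y ys)) => _ ->.
Qed.

Lemma lincomb_mulr (T : eqType) (w : T -> 'I_m -> K) G v (u : 'I_m -> K) :
  is_lincomb w G v -> is_lincomb (fun x j => w x j * u j) G (fun j => v j * u j).
Proof.
move=> [s [sG vE]]; exists s; split=> // j.
by rewrite vE mulr_suml; apply: eq_bigr => y _; rewrite mulrA.
Qed.

End LinearCombination.

Definition eval_vec (K : fieldType) n m (Q : 'I_m -> 'I_n -> K) (c : 'X_{1..n})
  : 'I_m -> K := fun j => ('X_[c] : {mpoly K[n]}).@[Q j].

Definition reducible (K : fieldType) n m (le : rel 'X_{1..n}) (Q : 'I_m -> 'I_n -> K)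
    (b : 'X_{1..n}) : Prop :=
  is_lincomb (eval_vec Q) (fun c => le c b && (c != b)) (eval_vec Q b).

Lemma mcoeff_sumZX_notin (K : fieldType) n (s : seq (K * 'X_{1..n})) d :
  d \notin [seq y.2 | y <- s] -> (\sum_(y <- s) y.1 *: 'X_[y.2] : {mpoly K[n]})@_d = 0.
Proof.
move=> dNs; rewrite raddf_sum big1_seq //= => y ys.
rewrite mcoeffZ mcoeffX; case: eqP => [y2d|]; last by rewrite mulr0.
by rewrite -y2d map_f in dNs.
Qed.

Section StandardMonomials.
Variables (K : fieldType) (n m : nat) (le : rel 'X_{1..n}) (Q : 'I_m -> 'I_n -> K).
Local Notation IQ := (vanishing_ideal (fun x => exists j, x = Q j)).

Lemma reducible_in_initial_ideal b :
  reflexive le -> reducible le Q b -> in_initial_ideal le IQ 'X_[b].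
Proof.
move=> le_refl [s [s_lt bE]].
pose F : {mpoly K[n]} := 'X_[b] - \sum_(y <- s) y.1 *: 'X_[y.2].
have bNs : b \notin [seq y.2 | y <- s].
  by apply/mapP => -[y ys b_y]; move: (s_lt y ys); rewrite -b_y eqxx andbF.
have Fb : F@_b = 1 by rewrite mcoeffB mcoeffX eqxx mcoeff_sumZX_notin ?subr0.
exists [:: (1, b)]; split; last by rewrite big_seq1 mul1r.
move=> _ /[1!inE]/eqP -> /=; exists F; split.
- move=> _ [j ->]; rewrite mevalB (big_morph _ (mevalD _) (meval0 _)).
  by under eq_bigr do rewrite mevalZ; rewrite -bE subrr.
- by apply: contra_neq (oner_neq0 K) => F0; rewrite -Fb F0 mcoeff0.
- rewrite /is_lead mcoeff_msupp Fb oner_neq0; apply/allP => d.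
  have [<-|b_neq_d] := eqVneq b d; first by rewrite le_refl.
  rewrite mcoeff_msupp mcoeffB mcoeffX (negbTE b_neq_d) sub0r oppr_eq0.
  apply: contraNT => d_nlt; rewrite mcoeff_sumZX_notin //.
  by apply: contra d_nlt => /mapP [y ys ->]; case/andP: (s_lt y ys).
Qed.

Lemma lead_monomial_reducible f c : IQ f -> is_lead le f c -> reducible le Q c.
Proof.
move=> fI /andP [c_supp c_lead].
have fc_neq0 : f@_c != 0 by rewrite -mcoeff_msupp.
exists [seq (- f@_d / f@_c, d) | d <- msupp f & d != c]; split.
  move=> _ /mapP [d /[!mem_filter] /andP [d_neq_c d_supp] ->] /=.
  by rewrite (allP c_lead) //.
move=> j; rewrite big_map big_filter.
have /eqP : f.@[Q j] = 0 by apply: fI; exists j.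
rewrite {1}(mpolyE f) (big_morph _ (mevalD _) (meval0 _)) (bigD1_seq c) ?msupp_uniq //=.
rewrite addr_eq0 mevalZ => /eqP fc_eq.
rewrite /eval_vec -[LHS](mulKf fc_neq0) fc_eq mulrN mulr_sumr -sumrN.
by apply: eq_bigr => d _; rewrite mevalZ; field.
Qed.

Lemma reducible_addm b e :
  (forall a a' c, le a a' -> le (a + c)%MM (a' + c)%MM) ->
  reducible le Q b -> reducible le Q (b + e)%MM.
Proof.
move=> le_addr /(lincomb_mulr (eval_vec Q e)) b_red.
have evalD d : eval_vec Q (d + e)%MM =1 (fun j => eval_vec Q d j * eval_vec Q e j).
  by move=> j; rewrite /eval_vec mpolyXD mevalM.
apply: (lincomb_map (f := fun d => (d + e)%MM) _ (evalD b) b_red) => d /andP [d_le d_neq].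
by rewrite le_addr //= eqm_add2r.
Qed.

Lemma in_initial_ideal_reducible b :
  (forall a a' c, le a a' -> le (a + c)%MM (a' + c)%MM) ->
  in_initial_ideal le IQ 'X_[b] -> reducible le Q b.
Proof.
move=> le_addr [s [s_lead bE]].
have /hasP [[g c] gc_s] : has (fun gc => b \in msupp (gc.1 * 'X_[gc.2])) s.
  apply/negPn/negP => /hasPn b_nsupp; have := mcoeffX K b b.
  rewrite eqxx {1}bE raddf_sum big1_seq /= => [/eqP|gc /b_nsupp]; last first.
    by rewrite mcoeff_msupp negbK => /eqP.
  by rewrite eq_sym oner_eq0.
rewrite (perm_mem (msuppMX _ _)) => /mapP [e _ ->] /=.
have [f [fI _ f_lead]] := s_lead _ gc_s.
exact/reducible_addm/(lead_monomial_reducible fI f_lead).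
Qed.

Hypothesis le_mo : monomial_order le.

Lemma in_initial_idealX_reducible b : in_initial_ideal le IQ 'X_[b] <-> reducible le Q b.
Proof.
split; first exact/in_initial_ideal_reducible/mo_addr.
exact/reducible_in_initial_ideal/mo_refl.
Qed.

Lemma eval_vec_standard_span c :
  is_lincomb (eval_vec Q) (fun d => standard_monomial le IQ d /\ le d c) (eval_vec Q c).
Proof.
elim/(well_founded_induction (monomial_order_wf le_mo)): c => c IHc.
have [c_std|/NNPP/in_initial_idealX_reducible c_red] := classic (standard_monomial le IQ c).
  by apply: lincomb_self; rewrite (mo_refl le_mo).
apply: lincomb_trans c_red => d /[dup] d_lt /IHc.
apply: (lincomb_map (f := id)) => // d' [d'_std d'_le].
by case/andP: d_lt => d_le _; do 2!split=> //; apply: mo_trans d_le.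
Qed.

End StandardMonomials.

Section Projection.
Variables (K : fieldType) (n m : nat) (le : rel 'X_{1..n}) (P : 'I_m -> 'I_n -> K).
Variable E : {set 'I_n}.
Hypothesis le_mo : monomial_order le.
Local Notation IP := (vanishing_ideal (fun x => exists j, x = P j)).
Local Notation PE := (fun j => proj_pt (E:=E) (P j)).
Local Notation IPE := (vanishing_ideal (fun y => exists j, y = PE j)).
Hypothesis standard_supported : forall b, standard_monomial le IP b -> supported_in E b.

Lemma eval_vec_emb_mon b' : eval_vec PE b' =1 eval_vec P (emb_mon b').
Proof. by move=> j; rewrite /eval_vec mevalX_emb_mon. Qed.

Lemma reducible_emb_mon b' :
  reducible (induced_order le) PE b' <-> reducible le P (emb_mon b').
Proof.
split.
  apply: (lincomb_map (f := @emb_mon n E) _ (fun j => esym (eval_vec_emb_mon b' j))).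
  move=> d' d'_lt.
  by split=> [|j]; rewrite ?(inj_eq (@emb_mon_inj n E)) ?eval_vec_emb_mon.
move=> /(lincomb_trans (G := fun d => standard_monomial le IP d /\
                                       le d (emb_mon b') && (d != emb_mon b'))) b_span.
apply: (lincomb_map (f := restr_mon E) _ (eval_vec_emb_mon b') (b_span _)).
  move=> d [/standard_supported d_supp /andP [d_le d_neq]].
  split=> [|j]; last by rewrite eval_vec_emb_mon restr_monK.
  by rewrite /induced_order -(inj_eq (@emb_mon_inj n E)) restr_monK // d_le d_neq.
move=> d /andP [d_le d_neq].
apply: (lincomb_map (f := id) _ (frefl _) (eval_vec_standard_span P le_mo d)).
move=> d' [d'_std d'_le].
do 2!split=> //; rewrite (mo_trans le_mo d'_le d_le).
apply: contra_neq d_neq => d'_eq.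
by apply: (mo_anti le_mo); rewrite d_le -d'_eq d'_le.
Qed.

Lemma standard_emb_mon b' :
  standard_monomial (induced_order le) IPE b' <-> standard_monomial le IP (emb_mon b').
Proof.
rewrite /standard_monomial (in_initial_idealX_reducible _ (induced_order_mo E le_mo)).
by rewrite (in_initial_idealX_reducible _ le_mo) reducible_emb_mon.
Qed.

End Projection.

Theorem mainTheorem14 (K : fieldType) (n m : nat) (le : rel 'X_{1..n})
    (P : 'I_m -> 'I_n -> K) (E : {set 'I_n}) :
  monomial_order le ->
  injective P ->
  (forall b : 'X_{1..n},
     standard_monomial le (vanishing_ideal (fun x => exists j, x = P j)) b ->
     forall i : 'I_n, (0 < b i)%N -> i \in E) ->
  (#|E| <= m - 1)%N -> (0 < m)%N -> (#|E| <= n)%N ->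
  \rank (eval_matrix E P) = #|E| ->
  forall b : 'X_{1..n},
    standard_monomial le (vanishing_ideal (fun x => exists j, x = P j)) b <->
    exists2 b' : 'X_{1..#|E|},
      standard_monomial (induced_order le)
        (vanishing_ideal (fun y => exists j, y = proj_pt (E:=E) (P j))) b'
      & b = emb_mon b'.
Proof.
move=> le_mo _ std_supp _ _ _ _ b; split=> [b_std|[b' b'_std ->]].
  exists (restr_mon E b); last by rewrite restr_monK //; apply: std_supp.
  by apply/(standard_emb_mon le_mo std_supp); rewrite restr_monK //; apply: std_supp.
exact/(standard_emb_mon le_mo std_supp).
Qed.
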